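(* A finitely generated associative algebra $A$ is NC-complete if and only if it is Lie complete. Similarly, $A$ is NC-nilpotent if and only if it is Lie nilpotent.
   Context: $L_1=A$, $L_k=[A,L_{k-1}]$, $M_k=AL_kA$. The NC-filtration is $F_k=\sum_{m\ge1}\sum_{i_1+\cdots+i_m=k+m}M_{i_1}\cdots M_{i_m}$. $A$ is Lie complete (resp. NC-complete) if it is complete in the topology defined by the filtration $M_\bullet$ (resp. $F_\bullet$); $A$ is Lie nilpotent (resp. NC-nilpotent) if $M_N(A)=0$ (resp. $F_N(A)=0$) for some $N$. *)

From HB Require Import structures.
From mathcomp Require Import all_boot all_order all_algebra.
Set Implicit Arguments. Unset Strict Implicit. Unset Printing Implicit Defensive.
Import GRing.Theory.
Local Open Scope ring_scope.

Section NCFiltration.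
Variables (K : fieldType) (A : algType K).

Inductive span (S : A -> Prop) : A -> Prop :=
  | span_in x : S x -> span S x
  | span_0 : span S 0
  | span_add x y : span S x -> span S y -> span S (x + y)
  | span_scale (c : K) x : span S x -> span S (c *: x).

Definition setmul (P Q : A -> Prop) : A -> Prop :=
  span (fun x => exists p q, P p /\ Q q /\ x = p * q).

Definition commA (V : A -> Prop) : A -> Prop :=
  span (fun x => exists a v, V v /\ x = a * v - v * a).

(* L k : L_1 = A, L_{k+1} = [A, L_k]  (L 0 := A, an unused dummy) *)
Fixpoint Lser (k : nat) : A -> Prop :=
  match k with
  | 0 => fun _ => True
  | k'.+1 => if k' == 0%N then (fun _ => True) else commA (Lser k')
  end.

Definition Mser (k : nat) : A -> Prop :=
  span (fun x => exists a v b, Lser k v /\ x = a * v * b).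

Fixpoint Mprod (s : seq nat) : A -> Prop :=
  match s with
  | [::] => fun x => x = 1
  | i :: s' => setmul (Mser i) (Mprod s')
  end.

Definition Fser (k : nat) : A -> Prop :=
  span (fun x => exists s : seq nat,
          [/\ s != [::], all (fun i => 0 < i)%N s,
              sumn s = (k + size s)%N & Mprod s x]).

(* A is complete (Hausdorff and complete) for the filtration V:
   the canonical map A -> lim A / V_k is bijective. *)
Definition filt_complete (V : nat -> A -> Prop) : Prop :=
  (forall x, (forall k, V k x) -> x = 0) /\
  (forall x : nat -> A, (forall j k, (k <= j)%N -> V k (x j - x k)) ->
     exists a, forall k, V k (a - x k)).

Definition filt_nilpotent (V : nat -> A -> Prop) : Prop :=
  exists N, forall x, V N x -> x = 0.

Definition Lie_complete := filt_complete Mser.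
Definition NC_complete := filt_complete Fser.
Definition Lie_nilpotent := filt_nilpotent Mser.
Definition NC_nilpotent := filt_nilpotent Fser.

Definition fin_gen : Prop :=
  exists gens : seq A, forall x,
    span (fun y => exists w : seq A, all (fun a => a \in gens) w /\
                     y = \prod_(a <- w) a) x.

End NCFiltration.

From Pilot Require Import Defs.
From mathcomp Require Import all_boot all_order all_algebra.
From mathcomp Require Import zify.
Set Implicit Arguments. Unset Strict Implicit. Unset Printing Implicit Defensive.
Import GRing.Theory.
Local Open Scope ring_scope.

(* Since M_{k+1} ⊆ F_k trivially, everything follows once F_N ⊆ M_k for some
   N = N(k); the two filtrations are then cofinal, so they define the same
   completion and vanish together.  Let g be the number of generators of A.
   For w1, w2 in L_k the product [y,w1][y,w2] lies in M_{k+2}, so modulo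
   M_{k+2} every element of M_{k+1} is a sum of g terms taken from the left
   ideals T = A[y,L_k], y a generator, and T A T ⊆ M_{k+2} for each of them.
   By pigeonhole a product of g+1 elements of M_{k+1} lies in M_{k+2}, hence
   a product of (g+1)^j elements of M_2 lies in M_{j+2}.
   A spanning product of F_N with all indices below k has at least
   N/(k-1) factors in M_2, which gives F_{k(g+1)^k} ⊆ M_k. *)

Section Filtrations.
Variables (K : fieldType) (A : algType K).
Implicit Types (x y z a b v w t : A) (P S : A -> Prop).

Definition subspace P :=
  [/\ P 0, (forall x y, P x -> P y -> P (x + y)) & (forall (c : K) x, P x -> P (c *: x))].

Definition ideal P :=
  [/\ subspace P, (forall a x, P x -> P (a * x)) & (forall a x, P x -> P (x * a))].

Lemma span_subspace S : subspace (Defs.span S).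
Proof. by split; [exact: span_0 | exact: span_add | exact: span_scale]. Qed.

Lemma span_sub S P : subspace P -> (forall x, S x -> P x) -> forall x, Defs.span S x -> P x.
Proof. by case=> P0 PD PZ SP x; elim; auto. Qed.

Lemma subspace_preim P (f : A -> A) : subspace P -> linear f -> subspace (fun x => P (f x)).
Proof.
case=> P0 PD PZ lin_f.
have f0 : f 0 = 0 by have := lin_f (-1) 0 0; rewrite scaler0 addr0 scaleN1r addNr.
split; first by rewrite f0.
- by move=> x y Px Py; have := lin_f 1 x y; rewrite !scale1r => ->; exact: PD.
- by move=> c x Px; have := lin_f c x 0; rewrite f0 !addr0 => ->; exact: PZ.
Qed.

Lemma span_sub_linear S P (f : A -> A) : subspace P -> linear f ->
  (forall x, S x -> P (f x)) -> forall x, Defs.span S x -> P (f x).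
Proof. by move=> sP lin_f; apply: span_sub; apply: subspace_preim. Qed.

Lemma subspaceN P x : subspace P -> P x -> P (- x).
Proof. by case=> _ _ PZ Px; rewrite -scaleN1r; apply: PZ. Qed.

Lemma subspaceB P x y : subspace P -> P x -> P y -> P (x - y).
Proof. by move=> sP Px Py; case: (sP) => _ PD _; apply: PD => //; apply: subspaceN. Qed.

Lemma subspace_sum P (I : finType) (F : I -> A) :
  subspace P -> (forall i, P (F i)) -> P (\sum_i F i).
Proof. by case=> P0 PD _ PF; apply: (big_ind P). Qed.

Lemma linear_mull a : linear (fun x : A => a * x).
Proof. by move=> c u v; rewrite mulrDr scalerAr. Qed.

Lemma linear_mulr a : linear (fun x : A => x * a).
Proof. by move=> c u v; rewrite mulrDl scalerAl. Qed.

Definition bracket x y := x * y - y * x.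

Lemma bracket_antisym x y : bracket x y = - bracket y x.
Proof. by rewrite /bracket opprB. Qed.

Lemma bracketxx x : bracket x x = 0.
Proof. exact: subrr. Qed.

Lemma bracketDl x y z : bracket (x + y) z = bracket x z + bracket y z.
Proof. by rewrite /bracket mulrDl mulrDr opprD addrACA. Qed.

Lemma linear_bracketl w : linear (bracket^~ w).
Proof. by move=> c u v; rewrite bracketDl /bracket -scalerAl -scalerAr scalerBr. Qed.

Lemma bracketMl x y z : bracket (x * y) z = x * bracket y z + bracket x z * y.
Proof. by rewrite /bracket mulrBr mulrBl !mulrA addrA subrK. Qed.

Lemma mulr_swap x y : x * y = y * x + bracket x y.
Proof. by rewrite /bracket addrC subrK. Qed.

Lemma Lser_small k x : (k <= 1)%N -> Lser k x.
Proof. by case: k => [|[|]]. Qed.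

Lemma LserS k : (0 < k)%N -> Lser k.+1 = commA (@Lser K A k).
Proof. by case: k. Qed.

Lemma Lser_subspace k : subspace (Lser k).
Proof.
case: k => [|[|k]]; try by split.
by rewrite LserS //; apply: span_subspace.
Qed.

Lemma Lser_bracket k a v : (0 < k)%N -> Lser k v -> Lser k.+1 (bracket a v).
Proof. by move=> k_gt0 Lv; rewrite LserS //; apply: span_in; exists a, v. Qed.

Lemma Lser_bracketr k a v : (0 < k)%N -> Lser k v -> Lser k.+1 (bracket v a).
Proof.
move=> k_gt0 Lv; rewrite bracket_antisym.
by apply: subspaceN; [exact: Lser_subspace | exact: Lser_bracket].
Qed.

Lemma commA_mono V W : (forall x, V x -> W x) -> forall x, commA V x -> commA W x.
Proof.
move=> VW; apply: span_sub; first exact: span_subspace.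
by move=> _ [a [v [Vv ->]]]; apply: span_in; exists a, v; split => //; apply: VW.
Qed.

Lemma Lser_decr k x : Lser k.+1 x -> Lser k x.
Proof.
elim: k x => [|[|k] IH] x //.
by rewrite (LserS (k := k.+2)) // (LserS (k := k.+1)) //; apply: commA_mono.
Qed.

Lemma Mser_ideal k : ideal (Mser k).
Proof.
split; first exact: span_subspace.
- move=> a; apply: span_sub_linear (linear_mull a) _; first exact: span_subspace.
  by move=> _ [a' [v [b [Lv ->]]]]; apply: span_in; exists (a * a'), v, b; rewrite !mulrA.
- move=> a; apply: span_sub_linear (linear_mulr a) _; first exact: span_subspace.
  by move=> _ [a' [v [b [Lv ->]]]]; apply: span_in; exists a', v, (b * a); rewrite !mulrA.
Qed.

Lemma Lser_sub_Mser k v : Lser k v -> Mser k v.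
Proof. by move=> Lv; apply: span_in; exists 1, v, 1; rewrite mul1r mulr1. Qed.

Lemma Mser_le j k x : (k <= j)%N -> Mser j x -> Mser k x.
Proof.
move=> /subnK <-; elim: (j - k)%N => [//|d IH] Mx; apply: IH.
move: x Mx; apply: span_sub; first exact: span_subspace.
by move=> _ [a [v [b [Lv ->]]]]; apply: span_in; exists a, v, b; split => //; apply: Lser_decr.
Qed.

Lemma Mser_small k x : (k <= 1)%N -> Mser k x.
Proof. by move=> k_le1; apply/Lser_sub_Mser/Lser_small. Qed.

Lemma Mser_sub_Fser k x : Mser k.+1 x -> Fser k x.
Proof.
move=> Mx; apply: span_in; exists [:: k.+1]; split => //; first by rewrite /= addn0 addn1.
by apply: span_in; exists x, 1; rewrite mulr1.
Qed.

Lemma mul_bracket_Mser k y w1 w2 : (0 < k)%N -> Lser k w1 -> Lser k w2 ->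
  Mser k.+2 (bracket y w1 * bracket y w2).
Proof.
move=> k_gt0 L1 L2; have [sM lM rM] := Mser_ideal k.+2.
set Q := bracket y w1; set X := bracket (y * w2) w1.
(* Expand [[y w2, w1], y] by the Leibniz rule: all but one term are visibly in M_{k+2}. *)
have leibniz : bracket X y =
    y * bracket (bracket w2 w1) y + (Q * bracket w2 y + bracket Q y * w2).
  by rewrite /X bracketMl bracketDl !bracketMl bracketxx mul0r addr0.
have -> : Q * bracket y w2 =
    - (bracket X y - y * bracket (bracket w2 w1) y - bracket Q y * w2).
  by rewrite leibniz [bracket y w2]bracket_antisym mulrN [y * _ + _]addrC !addrK.
have L3 u : Lser k.+2 (bracket (bracket u w1) y).
  by apply: Lser_bracketr => //; apply: Lser_bracket.
apply: subspaceN => //; apply: subspaceB => //; [apply: subspaceB => //|].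
- exact/Lser_sub_Mser/L3.
- exact/lM/Lser_sub_Mser/L3.
- exact/rM/Lser_sub_Mser/L3.
Qed.

Definition Tser k y := Defs.span (fun x => exists a w, Lser k w /\ x = a * bracket y w).

Lemma Tser_mull k y a t : Tser k y t -> Tser k y (a * t).
Proof.
move: t; apply: span_sub_linear (linear_mull a) _; first exact: span_subspace.
by move=> _ [a' [w [Lw ->]]]; apply: span_in; exists (a * a'), w; rewrite mulrA.
Qed.

Lemma Tser_mul_Tser k y t z t' : (0 < k)%N -> Tser k y t -> Tser k y t' ->
  Mser k.+2 (t * z * t').
Proof.
move=> k_gt0 Ht Ht'; have [sM lM rM] := Mser_ideal k.+2.
rewrite -mulrA; move: t Ht; apply: span_sub_linear (linear_mulr _) _ => //.
move=> _ [a [w1 [L1 ->]]]; rewrite mulrA.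
move: t' Ht'; apply: span_sub_linear (linear_mull _) _ => //.
move=> _ [b [w2 [L2 ->]]].
have -> : a * bracket y w1 * z * (b * bracket y w2) =
    a * (z * b) * (bracket y w1 * bracket y w2)
    - a * bracket (z * b) (bracket y w1) * bracket y w2.
  move: (bracket y w1) (bracket y w2) => C1 C2.
  by rewrite /bracket mulrBr mulrBl !mulrA opprB addrC subrK.
apply: subspaceB => //; first by apply/lM/mul_bracket_Mser.
by apply/rM/lM/Lser_sub_Mser/Lser_bracket/Lser_bracket.
Qed.

Lemma ideal_prodB P m (F G : 'I_m -> A) : ideal P -> (forall i, P (F i - G i)) ->
  P (\prod_i F i - \prod_i G i).
Proof.
case=> sP lP rP; elim: m F G => [|m IH] F G PFG.
  by rewrite !big_ord0 subrr; case: sP.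
rewrite !big_ord_recr /=; set a := \prod_(i < m) _; set a' := \prod_(i < m) _.
have -> : a * F ord_max - a' * G ord_max =
    (a - a') * F ord_max + a' * (F ord_max - G ord_max).
  by rewrite mulrBl mulrBr addrA subrK.
by case: sP => _ PD _; apply: PD; [apply/rP/IH | apply: lP].
Qed.

Lemma ideal_prod_pair P m (F : 'I_m -> A) (i j : 'I_m) : ideal P -> (i < j)%N ->
  (forall z, P (F i * z * F j)) -> P (\prod_l F l).
Proof.
case=> _ lP rP lt_ij PF.
case: m F i j lt_ij PF => [|m] F i j lt_ij PF; first by have := ltn_ord i.
pose G l := F (inord l).
have GF (l : 'I_m.+1) : G l = F l by rewrite /G inord_val.
rewrite (eq_bigr (G \o val)) => [|l _]; last by rewrite /= GF.
have [le_i le_j] : (i <= m.+1)%N /\ (j <= m.+1)%N by split; apply: ltnW.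
rewrite -(big_mkord xpredT G) (big_cat_nat _ (n := i)) // (@big_ltn _ _ _ i) //=.
rewrite (@big_cat_nat _ _ _ j i.+1) // (@big_ltn _ _ _ j) //= !GF.
by rewrite !mulrA; apply: rP; rewrite -!mulrA; apply: lP; rewrite mulrA.
Qed.

Lemma ord_pigeonhole m n (f : 'I_m -> 'I_n) :
  (n < m)%N -> exists i j : 'I_m, (i < j)%N /\ f i = f j.
Proof.
move=> lt_nm; have /injectivePn [i [j neq_ij eq_fij]] : ~~ injectiveb f.
  by apply: contraTN lt_nm; rewrite -leqNgt => /injectiveP/leq_card; rewrite !card_ord.
case: (ltngtP i j) => [lt_ij|gt_ij|eq_ij]; [by exists i, j | by exists j, i |].
by move: neq_ij; rewrite (val_inj eq_ij) eqxx.
Qed.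

Section Generators.
Variable gens : seq A.
Hypothesis gens_span : forall x,
  Defs.span (fun y => exists w : seq A, all (fun a => a \in gens) w /\
                   y = \prod_(a <- w) a) x.

Local Notation g := (size gens).

Definition in_Tsum k x := exists t : 'I_g -> A,
  (forall i : 'I_g, Tser k gens`_i (t i)) /\ Mser k.+2 (x - \sum_i t i).

Lemma in_Tsum_subspace k : subspace (in_Tsum k).
Proof.
have [[M0 MD MZ] _ _] := Mser_ideal k.+2.
split.
- by exists (fun=> 0); split=> [i|]; [exact: span_0 | rewrite big1 // subr0].
- move=> x1 x2 [t1 [T1 M1]] [t2 [T2 M2]]; exists (fun i => t1 i + t2 i).
  split=> [i|]; first exact: span_add (T1 i) (T2 i).
  by rewrite big_split opprD addrACA; apply: MD.
- move=> c x [t [T M]]; exists (fun i => c *: t i); split=> [i|]; first exact: span_scale (T i).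
  by rewrite -scaler_sumr -scalerBr; apply: MZ.
Qed.

Lemma in_Tsum_mull k a x : in_Tsum k x -> in_Tsum k (a * x).
Proof.
have [_ lM _] := Mser_ideal k.+2.
case=> t [T M]; exists (fun i => a * t i); split=> [i|]; first exact: Tser_mull (T i).
by rewrite -mulr_sumr -mulrBr; apply: lM.
Qed.

Lemma in_Tsum_Mser k x : Mser k.+2 x -> in_Tsum k x.
Proof. by exists (fun=> 0); split=> [i|]; [exact: span_0 | rewrite big1 // subr0]. Qed.

Lemma in_Tsum_gen k y a w : y \in gens -> Lser k w -> in_Tsum k (a * bracket y w).
Proof.
move=> y_gen Lw; pose i0 : 'I_g := Ordinal (etrans (index_mem y gens) y_gen).
exists (fun i => if i == i0 then a * bracket y w else 0); split.
  move=> i; case: eqP => [->|_]; last exact: span_0.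
  by apply: span_in; exists a, w; rewrite nth_index.
rewrite (bigD1 i0) //= eqxx big1 => [|i /negbTE -> //].
by rewrite addr0 subrr; case: (Mser_ideal k.+2) => -[].
Qed.

Lemma in_Tsum_bracket_word k w l : (0 < k)%N -> Lser k w ->
  all (fun a => a \in gens) l -> in_Tsum k (bracket (\prod_(a <- l) a) w).
Proof.
move=> k_gt0 Lw; elim: l => [|y l IH] /=.
  by rewrite big_nil /bracket mul1r mulr1 subrr; case: (in_Tsum_subspace k).
case/andP=> y_gen l_gen; rewrite big_cons bracketMl [bracket y w * _]mulr_swap.
case: (in_Tsum_subspace k) => _ RD _.
apply: (RD); first exact/in_Tsum_mull/IH.
apply: (RD); first exact: in_Tsum_gen.
by apply/in_Tsum_Mser/Lser_sub_Mser/Lser_bracketr => //; apply: Lser_bracket.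
Qed.

Lemma Mser_in_Tsum k x : (0 < k)%N -> Mser k.+1 x -> in_Tsum k x.
Proof.
move=> k_gt0; apply: span_sub; first exact: in_Tsum_subspace.
move=> _ [a [v [b [Lv ->]]]].
rewrite -mulrA [v * b]mulr_swap mulrDr; case: (in_Tsum_subspace k) => _ RD _.
apply: (RD); last by apply/in_Tsum_mull/in_Tsum_Mser/Lser_sub_Mser/Lser_bracketr.
apply/in_Tsum_mull/in_Tsum_mull; move: v Lv; rewrite LserS //.
apply: span_sub; first exact: in_Tsum_subspace.
move=> _ [a' [w [Lw ->]]]; rewrite -/(bracket a' w); move: a' (gens_span a').
apply: span_sub_linear (linear_bracketl w) _; first exact: in_Tsum_subspace.
by move=> _ [l [l_gen ->]]; apply: in_Tsum_bracket_word.
Qed.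

Lemma Mser_prod_pigeonhole k (qs : seq A) : (0 < k)%N -> size qs = g.+1 ->
  (forall q, q \in qs -> Mser k.+1 q) -> Mser k.+2 (\prod_(q <- qs) q).
Proof.
move=> k_gt0 size_qs Mqs; have Mi := Mser_ideal k.+2; have [[_ MD _] _ _] := Mi.
rewrite (big_nth 0) big_mkord.
have /fin_all_exists [t Ht] (i : 'I_(size qs)) : exists t : 'I_g -> A,
    (forall j : 'I_g, Tser k gens`_j (t j)) /\ Mser k.+2 (qs`_i - \sum_j t j).
  exact/Mser_in_Tsum/Mqs/mem_nth.
rewrite -[\prod_i _](subrK (\prod_i \sum_j t i j)); apply: MD.
  by apply: ideal_prodB => // i; case: (Ht i).
rewrite bigA_distr_bigA /=; apply: subspace_sum => [|f]; first by case: Mi.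
have [i [j [lt_ij fij]]] : exists i j : 'I_(size qs), (i < j)%N /\ f i = f j.
  by apply: ord_pigeonhole; rewrite size_qs.
apply: (ideal_prod_pair (F := fun i => t i (f i))) lt_ij _ => // z.
apply: (Tser_mul_Tser (y := gens`_(f i))) => //; first by case: (Ht i).
by rewrite fij; case: (Ht j).
Qed.

Lemma prod_blocks (Q : A -> Prop) B r (l : seq A) : (r.+1 * B <= size l)%N ->
  (forall l', (B <= size l')%N -> {subset l' <= l} -> Q (\prod_(a <- l') a)) ->
  exists qs, [/\ size qs = r.+1, forall q, q \in qs -> Q q &
                 \prod_(a <- l) a = \prod_(a <- qs) a].
Proof.
elim: r l => [|r IH] l size_l Qblock.
  exists [:: \prod_(a <- l) a]; split=> //; last by rewrite big_seq1.
  by move=> q; rewrite inE => /eqP ->; apply: Qblock; rewrite // -(mul1n B).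
have le_B : (B <= size l)%N by apply: leq_trans size_l; rewrite leq_pmull.
have size_drop_l : (r.+1 * B <= size (drop B l))%N.
  by rewrite size_drop leq_subRL // -mulSn.
have [qs [size_qs Qqs prod_qs]] :=
  IH _ size_drop_l (fun l' h sub => Qblock l' h (fun q hq => mem_drop (sub q hq))).
exists (\prod_(a <- take B l) a :: qs); split; first by rewrite /= size_qs.
  move=> q; rewrite inE => /orP [/eqP ->|]; last exact: Qqs.
  by apply: Qblock => [|q' /mem_take //]; rewrite size_takel.
by rewrite -{1}(cat_take_drop B l) big_cat /= prod_qs big_cons.
Qed.

Lemma ideal_prod_mem P (l : seq A) q : ideal P -> q \in l -> P q -> P (\prod_(a <- l) a).
Proof.
case=> _ lP rP; elim: l => [//|a l IH]; rewrite inE big_cons => /orP [/eqP <- Pq|ql Pq].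
  exact: rP.
exact/lP/IH.
Qed.

Lemma Mser_prod_pow j (l : seq A) : (forall q, q \in l -> Mser 2 q) ->
  (g.+1 ^ j <= size l)%N -> Mser j.+2 (\prod_(q <- l) q).
Proof.
elim: j l => [|j IH] l Ml size_l.
  case: l Ml size_l => [//|a l] Ml _.
  by apply: (ideal_prod_mem (Mser_ideal _) (mem_head a l)); apply/Ml/mem_head.
rewrite expnS in size_l.
have [qs [size_qs Mqs ->]] := prod_blocks (Q := Mser j.+2) size_l
  (fun l' h sub => IH l' (fun q hq => Ml q (sub q hq)) h).
exact: Mser_prod_pigeonhole.
Qed.

Fixpoint factors_in (s : seq nat) (l : seq A) : Prop :=
  match s, l with
  | [::], [::] => True
  | i :: s', a :: l' => Mser i a /\ factors_in s' l'
  | _, _ => False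
  end.

Lemma Mprod_sub s P x : subspace P ->
  (forall l, factors_in s l -> P (\prod_(a <- l) a)) -> Mprod s x -> P x.
Proof.
elim: s P x => [|i s IH] P x sP Pprod /=.
  by move=> ->; have := Pprod [::] I; rewrite big_nil.
apply: span_sub => // _ [p [q [Mp [Mq ->]]]].
apply: (IH (fun q => P (p * q))) => //; first exact: subspace_preim (linear_mull p).
by move=> l Hl; have := Pprod (p :: l); rewrite big_cons; apply.
Qed.

Lemma factors_in_large k s l : factors_in s l -> has (fun i => k <= i)%N s ->
  Mser k (\prod_(a <- l) a).
Proof.
have [_ lM rM] := Mser_ideal k.
elim: s l => [|i s IH] [|a l] //= [Ma Hl] /orP [le_ki|large_s]; rewrite big_cons.
  exact/rM/(Mser_le le_ki).
exact/lM/IH.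
Qed.

Lemma sumn_small_parts k s : all (fun i => 0 < i)%N s -> ~~ has (fun i => k <= i)%N s ->
  (sumn s <= size s + k.-1 * count (fun i => 2 <= i)%N s)%N.
Proof.
elim: s => [//|i s IH] /= /andP [i_gt0 pos_s]; rewrite negb_or -ltnNge => /andP [lt_ik small_s].
by have := IH pos_s small_s; case: (leqP 2 i) => /=; nia.
Qed.

(* Factors from M_1 = A are absorbed into a neighbouring factor from M_2. *)
Lemma regroup_factors s l : factors_in s l -> (0 < count (fun i => 2 <= i)%N s)%N ->
  exists l', [/\ forall q, q \in l' -> Mser 2 q, size l' = count (fun i => 2 <= i)%N s &
                 \prod_(a <- l) a = \prod_(a <- l') a].
Proof.
have [_ lM rM] := Mser_ideal 2.
elim: s l => [|i s IH] [|a l] //= [Ma Hl].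
case: (leqP 2 i) => /= [le2i _|lti2]; last first.
  rewrite add0n => cnt_gt0; have [[|p l'] [Ml' size_l' prod_l]] := IH l Hl cnt_gt0.
    by rewrite -size_l' in cnt_gt0.
  exists (a * p :: l'); split=> //; last by rewrite !big_cons prod_l big_cons mulrA.
  move=> q; rewrite inE => /orP [/eqP ->|q_l']; first by apply/lM/Ml'; rewrite inE eqxx.
  by apply: Ml'; rewrite inE q_l' orbT.
have M2a : Mser 2 a := Mser_le le2i Ma.
case: (posnP (count (fun i => 2 <= i)%N s)) => [cnt0|cnt_gt0].
  exists [:: a * \prod_(b <- l) b]; rewrite cnt0 big_cons big_seq1; split=> //.
  by move=> q; rewrite inE => /eqP ->; apply: rM.
have [l' [Ml' size_l' prod_l]] := IH l Hl cnt_gt0.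
exists (a :: l'); split; last by rewrite !big_cons prod_l.
  by move=> q; rewrite inE => /orP [/eqP ->|]; last exact: Ml'.
by rewrite /= size_l'.
Qed.

Lemma Fser_sub_Mser k x : Fser (k * g.+1 ^ k) x -> Mser k x.
Proof.
case: k => [|[|j]] Fx; try exact: Mser_small.
have [sM _ _] := Mser_ideal j.+2.
move: x Fx; apply: span_sub => // y [s [_ pos_s sumn_s Ms]].
apply: (Mprod_sub (P := Mser j.+2)) Ms => // l Hl.
have [large|small] := boolP (has (fun i => j.+2 <= i)%N s); first exact: factors_in_large Hl large.
have bound := sumn_small_parts pos_s small; rewrite sumn_s /= in bound.
set c := count _ s in bound *.
have pow_le : (g.+1 ^ j <= g.+1 ^ j.+2)%N by apply: leq_pexp2l => //; apply: leqW.
have pow_gt0 : (0 < g.+1 ^ j)%N by rewrite expn_gt0.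
have le_pow_c : (g.+1 ^ j <= c)%N by nia.
have [l' [Ml' size_l' ->]] := regroup_factors Hl (leq_trans pow_gt0 le_pow_c).
by apply: Mser_prod_pow Ml' _; rewrite size_l'.
Qed.

End Generators.

Section Cofinal.
Variables (V W : nat -> A -> Prop) (f h : nat -> nat).
Hypothesis W_add : forall k x y, W k x -> W k y -> W k (x + y).
Hypothesis V_sub_W : forall k x, V (f k) x -> W k x.
Hypothesis W_sub_V : forall k x, W (h k) x -> V k x.
Hypothesis h_mono : {homo h : m n / (m <= n)%N}.
Hypothesis le_hf : forall k, (k <= h (f k))%N.

Lemma filt_complete_cofinal : filt_complete V -> filt_complete W.
Proof.
case=> sepV cplV; split=> [x Wx|x cauchy_x]; first by apply: sepV => k; apply/W_sub_V/Wx.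
have [a lim_a] := cplV (fun j => x (h j)) (fun j k le_kj => W_sub_V (cauchy_x _ _ (h_mono le_kj))).
exists a => k; rewrite -[a](subrK (x (h (f k)))) -addrA.
exact: W_add (V_sub_W (lim_a _)) (cauchy_x _ _ (le_hf k)).
Qed.

Lemma filt_nilpotent_cofinal : filt_nilpotent V -> filt_nilpotent W.
Proof. by case=> N nilV; exists (h N) => x /W_sub_V; apply: nilV. Qed.

End Cofinal.

End Filtrations.

Theorem claim2p4 (K : fieldType) (A : algType K) :
  fin_gen A ->
  (NC_complete A <-> Lie_complete A) /\ (NC_nilpotent A <-> Lie_nilpotent A).
Proof.
move=> [gens gens_span].
pose N k := (k * (size gens).+1 ^ k)%N.
have F_sub_M k (x : A) : Fser (N k) x -> Mser k x := Fser_sub_Mser gens_span (x := x).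
have M_sub_F k (x : A) : Mser k.+1 x -> Fser k x := @Mser_sub_Fser K A k x.
have N_mono : {homo N : m n / (m <= n)%N}.
  by move=> m n le_mn; apply: leq_mul => //; apply: leq_pexp2l.
have le_N k : (k <= N k)%N by rewrite leq_pmulr // expn_gt0.
have M_add k (x y : A) : Mser k x -> Mser k y -> Mser k (x + y).
  by case: (Mser_ideal A k) => -[_ MD _] _ _; apply: MD.
have F_add k (x y : A) : Fser k x -> Fser k y -> Fser k (x + y) := @span_add _ _ _ x y.
split; split.
- exact: filt_complete_cofinal M_add F_sub_M M_sub_F (fun m n => id) (fun k => leqW (le_N k)).
- exact: filt_complete_cofinal F_add M_sub_F F_sub_M N_mono
           (fun k => leq_trans (leqnSn k) (le_N k.+1)).
- exact: filt_nilpotent_cofinal M_sub_F.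
- exact: filt_nilpotent_cofinal F_sub_M.
Qed.
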